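(* Let $P,Q\in\Gamma_n$ and $0<r\le R$ with $r\le p_i/q_i\le R$ for all $i$. Let $s,t\in\mathbb{R}$ with $0\le s\le4$. If $s\ge t$ and $s(t-s+6)\ge4(1+t)$, then $$\Big(\frac{r+1}{2}\Big)^{s-t-1}(sr+4-s)\,\Omega_t(Q\|P)\le\zeta_s(P\|Q)\le\Big(\frac{R+1}{2}\Big)^{s-t-1}(sR+4-s)\,\Omega_t(Q\|P).$$ If $s\le t$ and $s(t-s+6)\le4(1+t)$, then $$\Big(\frac{R+1}{2}\Big)^{s-t-1}(sR+4-s)\,\Omega_t(Q\|P)\le\zeta_s(P\|Q)\le\Big(\frac{r+1}{2}\Big)^{s-t-1}(sr+4-s)\,\Omega_t(Q\|P).$$
   Context: $\Gamma_n=\{P=(p_1,\dots,p_n): p_i>0,\ \sum_i p_i=1\}$, $n\ge2$. For $P,Q\in\Gamma_n$ and $s\in\mathbb{R}$: $\Omega_s(Q\|P)=[s(s-1)]^{-1}\big[\sum_i q_i\big(\frac{p_i+q_i}{2q_i}\big)^s-1\big]$ for $s\ne0,1$; $\Omega_0(Q\|P)=\sum_i q_i\ln\frac{2q_i}{p_i+q_i}$; $\Omega_1(Q\|P)=\sum_i\frac{p_i+q_i}{2}\ln\frac{p_i+q_i}{2q_i}$. $\zeta_s(P\|Q)=(s-1)^{-1}\sum_i(p_i-q_i)\big(\frac{p_i+q_i}{2q_i}\big)^{s-1}$ for $s\ne1$; $\zeta_1(P\|Q)=\sum_i(p_i-q_i)\ln\frac{p_i+q_i}{2q_i}$. *)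

From Stdlib Require Import Reals.
Open Scope R_scope.

Fixpoint rsum (n : nat) (f : nat -> R) : R :=
  match n with
  | O => 0
  | S m => rsum m f + f m
  end.

(* P in Gamma_n : p_i > 0 for i < n and sum p_i = 1. Coordinates are p 0 .. p (n-1). *)
Definition in_Gamma (n : nat) (p : nat -> R) : Prop :=
  (forall i, (i < n)%nat -> 0 < p i) /\ rsum n p = 1.

Definition rpow (x s : R) : R := Rpower x s.

Definition Omega (n : nat) (s : R) (q p : nat -> R) : R :=
  if Req_EM_T s 0 then
    rsum n (fun i => q i * ln (2 * q i / (p i + q i)))
  else if Req_EM_T s 1 then
    rsum n (fun i => (p i + q i) / 2 * ln ((p i + q i) / (2 * q i)))
  else
    / (s * (s - 1)) *
      (rsum n (fun i => q i * rpow ((p i + q i) / (2 * q i)) s) - 1).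

Definition zeta (n : nat) (s : R) (p q : nat -> R) : R :=
  if Req_EM_T s 1 then
    rsum n (fun i => (p i - q i) * ln ((p i + q i) / (2 * q i)))
  else
    / (s - 1) *
      rsum n (fun i => (p i - q i) * rpow ((p i + q i) / (2 * q i)) (s - 1)).

(** With u_i = (p_i + q_i) / (2 q_i), and after adding multiples of
    Σ p_i = Σ q_i = 1, both divergences become q-weighted sums Σ q_i φ(u_i):
    ζ_s with φ = g_s, g_s(u) = 2 (u - 1) (u^(s-1) - 1) / (s - 1), and Ω_t with
    the Csiszár generator f_t(u) = (u^t - 1 - t (u - 1)) / (t (t - 1)).
    Both generators vanish to second order at u = 1, and g_s'' = h f_t'' with
    h(u) = u^(s-t-1) (2 s u - 2 s + 4) and f_t'' > 0.  Hence m f_t <= g_s <= M f_t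
    on every interval around 1 on which m <= h <= M.  All u_i lie in
    [(r+1)/2, (R+1)/2], which contains 1, and each of the two conditions on s, t
    makes h monotone there, so its extreme values are its values at the
    endpoints, namely the stated constants. *)

From Stdlib Require Import Reals Lra Lia.
From Coquelicot Require Import Coquelicot.
Open Scope R_scope.

Lemma rsum_ext n f g : (forall i, (i < n)%nat -> f i = g i) -> rsum n f = rsum n g.
Proof.
  induction n as [|n IH]; intros Hfg; simpl; [reflexivity|].
  rewrite IH by (intros; apply Hfg; lia). rewrite Hfg by lia. reflexivity.
Qed.

Lemma rsum_le n f g : (forall i, (i < n)%nat -> f i <= g i) -> rsum n f <= rsum n g.
Proof.
  induction n as [|n IH]; intros Hfg; simpl; [lra|].
  assert (f n <= g n) by (apply Hfg; lia).
  assert (rsum n f <= rsum n g) by (apply IH; intros; apply Hfg; lia).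
  lra.
Qed.

Lemma rsum_scal n f k : rsum n (fun i => k * f i) = k * rsum n f.
Proof. induction n as [|n IH]; simpl; [ring|]. rewrite IH; ring. Qed.

Lemma rsum_lincomb n f p q b c :
  rsum n (fun i => f i + b * p i + c * q i) = rsum n f + b * rsum n p + c * rsum n q.
Proof. induction n as [|n IH]; simpl; [ring|]. rewrite IH; ring. Qed.

Lemma Gamma_ratio_bounds n p q r R0 : in_Gamma n p -> in_Gamma n q ->
  (forall i, (i < n)%nat -> r <= p i / q i <= R0) -> r <= 1 <= R0.
Proof.
  intros [_ Sp] [Pq Sq] Hpq.
  assert (Hp : forall i, (i < n)%nat -> p i = p i / q i * q i).
  { intros i Hi. specialize (Pq i Hi). field. lra. }
  assert (rsum n (fun i => r * q i) <= rsum n p).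
  { apply rsum_le. intros i Hi. rewrite (Hp i Hi).
    specialize (Hpq i Hi). specialize (Pq i Hi). nra. }
  assert (rsum n p <= rsum n (fun i => R0 * q i)).
  { apply rsum_le. intros i Hi. rewrite (Hp i Hi).
    specialize (Hpq i Hi). specialize (Pq i Hi). nra. }
  rewrite rsum_scal, Sq in *. lra.
Qed.

Lemma nondecreasing_of_derive_nonneg (f f' : R -> R) a b :
  (forall c, a <= c <= b -> is_derive f c (f' c)) ->
  (forall c, a <= c <= b -> 0 <= f' c) -> a <= b -> f a <= f b.
Proof.
  intros df f'_ge0 Hab.
  destruct (Req_dec a b) as [<-|Hne]; [lra|].
  destruct (MVT_cor2 f f' a b) as [c [Ec Hc]]; [lra| |].
  - intros c Hc. apply is_derive_Reals, df. lra.
  - assert (0 <= f' c) by (apply f'_ge0; lra). nra.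
Qed.

Lemma nonincreasing_of_derive_nonpos (f f' : R -> R) a b :
  (forall c, a <= c <= b -> is_derive f c (f' c)) ->
  (forall c, a <= c <= b -> f' c <= 0) -> a <= b -> f b <= f a.
Proof.
  intros df f'_le0 Hab.
  cut (- f a <= - f b); [lra|].
  apply (nondecreasing_of_derive_nonneg (fun x => - f x) (fun x => - f' x)); auto.
  - intros c Hc. apply (is_derive_opp f), df, Hc.
  - intros c Hc. specialize (f'_le0 c Hc). lra.
Qed.

Lemma nonneg_of_derive2_nonneg (h h' h'' : R -> R) a b x0 :
  (forall c, a <= c <= b -> is_derive h c (h' c)) ->
  (forall c, a <= c <= b -> is_derive h' c (h'' c)) ->
  (forall c, a <= c <= b -> 0 <= h'' c) ->
  a <= x0 <= b -> h x0 = 0 -> h' x0 = 0 ->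
  forall u, a <= u <= b -> 0 <= h u.
Proof.
  intros dh dh' h''_ge0 Hx0 h0 h'0 u Hu. rewrite <- h0.
  destruct (Rle_or_lt x0 u) as [Hxu|Hux].
  - apply (nondecreasing_of_derive_nonneg h h'); [intros; apply dh; lra| |lra].
    intros c Hc. rewrite <- h'0.
    apply (nondecreasing_of_derive_nonneg h' h''); intros; try lra.
    + apply dh'; lra.
    + apply h''_ge0; lra.
  - apply (nonincreasing_of_derive_nonpos h h'); [intros; apply dh; lra| |lra].
    intros c Hc. rewrite <- h'0.
    apply (nondecreasing_of_derive_nonneg h' h''); intros; try lra.
    + apply dh'; lra.
    + apply h''_ge0; lra.
Qed.

Lemma le_of_derive2_le (f f' f'' g g' g'' : R -> R) a b x0 :
  (forall c, a <= c <= b -> is_derive f c (f' c)) ->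
  (forall c, a <= c <= b -> is_derive f' c (f'' c)) ->
  (forall c, a <= c <= b -> is_derive g c (g' c)) ->
  (forall c, a <= c <= b -> is_derive g' c (g'' c)) ->
  (forall c, a <= c <= b -> f'' c <= g'' c) ->
  a <= x0 <= b -> f x0 = g x0 -> f' x0 = g' x0 ->
  forall u, a <= u <= b -> f u <= g u.
Proof.
  intros df df' dg dg' f''_le Hx0 E0 E1 u Hu.
  cut (0 <= g u - f u); [lra|].
  apply (nonneg_of_derive2_nonneg (fun x => g x - f x) (fun x => g' x - f' x)
           (fun x => g'' x - f'' x) a b x0); auto; intros.
  - apply (is_derive_minus g f); auto.
  - apply (is_derive_minus g' f'); auto.
  - specialize (f''_le c H). lra.
  - lra.
  - lra.
Qed.

Lemma Rpower_1_l x : Rpower 1 x = 1.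
Proof. unfold Rpower. rewrite ln_1, Rmult_0_r. apply exp_0. Qed.

Definition zeta_gen (s u : R) : R :=
  if Req_EM_T s 1 then 2 * (u - 1) * ln u
  else 2 * (u - 1) * (Rpower u (s - 1) - 1) / (s - 1).

Definition zeta_gen' (s u : R) : R :=
  if Req_EM_T s 1 then 2 * ln u + 2 * (u - 1) / u
  else 2 * ((Rpower u (s - 1) - 1) + (u - 1) * (s - 1) * (Rpower u (s - 1) / u)) / (s - 1).

Definition zeta_gen'' (s u : R) : R := 2 * Rpower u (s - 1) / (u * u) * (s * u - s + 2).

Lemma is_derive_zeta_gen s c : 0 < c -> is_derive (zeta_gen s) c (zeta_gen' s c).
Proof.
  intros Hc. unfold zeta_gen, zeta_gen'. destruct (Req_EM_T s 1) as [->|Hs].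
  - auto_derive; [lra|]. field. lra.
  - unfold Rpower. auto_derive; [lra|]. field. split; lra.
Qed.

Lemma is_derive_zeta_gen' s c : 0 < c -> is_derive (zeta_gen' s) c (zeta_gen'' s c).
Proof.
  intros Hc. unfold zeta_gen', zeta_gen''. destruct (Req_EM_T s 1) as [->|Hs].
  - auto_derive; [lra|]. rewrite Rminus_diag, Rpower_O by lra. field. lra.
  - unfold Rpower. auto_derive; [lra|]. field. split; lra.
Qed.

Lemma zeta_gen_1 s : zeta_gen s 1 = 0.
Proof.
  unfold zeta_gen. destruct (Req_EM_T s 1); rewrite ?ln_1, ?Rpower_1_l; unfold Rdiv; ring.
Qed.

Lemma zeta_gen'_1 s : zeta_gen' s 1 = 0.
Proof.
  unfold zeta_gen'. destruct (Req_EM_T s 1); rewrite ?ln_1, ?Rpower_1_l; unfold Rdiv; ring.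
Qed.

Definition Omega_gen (t u : R) : R :=
  if Req_EM_T t 0 then - ln u + (u - 1)
  else if Req_EM_T t 1 then u * ln u - (u - 1)
  else (Rpower u t - 1 - t * (u - 1)) / (t * (t - 1)).

Definition Omega_gen' (t u : R) : R :=
  if Req_EM_T t 0 then - / u + 1
  else if Req_EM_T t 1 then ln u
  else (t * (Rpower u t / u) - t) / (t * (t - 1)).

Definition Omega_gen'' (t u : R) : R := Rpower u t / (u * u).

Lemma is_derive_Omega_gen t c : 0 < c -> is_derive (Omega_gen t) c (Omega_gen' t c).
Proof.
  intros Hc. unfold Omega_gen, Omega_gen'.
  destruct (Req_EM_T t 0) as [->|H0]; [|destruct (Req_EM_T t 1) as [->|H1]].
  - auto_derive; [lra|]. field. lra.
  - auto_derive; [lra|]. field. lra.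
  - unfold Rpower. auto_derive; [lra|]. field. repeat split; lra.
Qed.

Lemma is_derive_Omega_gen' t c : 0 < c -> is_derive (Omega_gen' t) c (Omega_gen'' t c).
Proof.
  intros Hc. unfold Omega_gen', Omega_gen''.
  destruct (Req_EM_T t 0) as [->|H0]; [|destruct (Req_EM_T t 1) as [->|H1]].
  - auto_derive; [lra|]. rewrite Rpower_O by lra. field. lra.
  - auto_derive; [lra|]. rewrite Rpower_1 by lra. field. lra.
  - unfold Rpower. auto_derive; [lra|]. field. repeat split; lra.
Qed.

Lemma Omega_gen_1 t : Omega_gen t 1 = 0.
Proof.
  unfold Omega_gen. destruct (Req_EM_T t 0); [|destruct (Req_EM_T t 1)];
    rewrite ?ln_1, ?Rpower_1_l; unfold Rdiv; ring.
Qed.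

Lemma Omega_gen'_1 t : Omega_gen' t 1 = 0.
Proof.
  unfold Omega_gen'. destruct (Req_EM_T t 0); [|destruct (Req_EM_T t 1)];
    rewrite ?ln_1, ?Rpower_1_l; unfold Rdiv; rewrite ?Rinv_1; ring.
Qed.

Lemma Omega_gen''_pos t c : 0 < c -> 0 < Omega_gen'' t c.
Proof.
  intros Hc. unfold Omega_gen''. apply Rdiv_lt_0_compat; [apply exp_pos | nra].
Qed.

Definition zeta_Omega_ratio (s t u : R) : R := Rpower u (s - t - 1) * (2 * s * u - 2 * s + 4).

Definition zeta_Omega_ratio' (s t u : R) : R :=
  Rpower u (s - t - 1) / u * (s * (t - s + 6) - 4 * (1 + t) + 2 * s * (s - t) * (u - 1/2)).

Lemma zeta_gen''_eq_ratio s t c : 0 < c ->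
  zeta_gen'' s c = zeta_Omega_ratio s t c * Omega_gen'' t c.
Proof.
  intros Hc. unfold zeta_gen'', zeta_Omega_ratio, Omega_gen''.
  replace (s - 1) with (t + (s - t - 1)) by ring. rewrite Rpower_plus.
  field. lra.
Qed.

Lemma is_derive_zeta_Omega_ratio s t c : 0 < c ->
  is_derive (zeta_Omega_ratio s t) c (zeta_Omega_ratio' s t c).
Proof.
  intros Hc. unfold zeta_Omega_ratio, zeta_Omega_ratio', Rpower.
  auto_derive; [lra|]. field. lra.
Qed.

Lemma zeta_Omega_ratio_nondecreasing s t x y :
  0 <= s -> t <= s -> 4 * (1 + t) <= s * (t - s + 6) -> 1/2 <= x -> x <= y ->
  zeta_Omega_ratio s t x <= zeta_Omega_ratio s t y.
Proof.
  intros Hs Hts Hcond Hx Hxy.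
  apply (nondecreasing_of_derive_nonneg _ (zeta_Omega_ratio' s t)); auto.
  - intros c Hc. apply is_derive_zeta_Omega_ratio. lra.
  - intros c Hc. unfold zeta_Omega_ratio'. apply Rmult_le_pos.
    + apply Rlt_le, Rdiv_lt_0_compat; [apply exp_pos | lra].
    + assert (0 <= s * (s - t) * (c - 1/2)).
      { apply Rmult_le_pos; [nra | lra]. }
      lra.
Qed.

Lemma zeta_Omega_ratio_nonincreasing s t x y :
  0 <= s -> s <= t -> s * (t - s + 6) <= 4 * (1 + t) -> 1/2 <= x -> x <= y ->
  zeta_Omega_ratio s t y <= zeta_Omega_ratio s t x.
Proof.
  intros Hs Hst Hcond Hx Hxy.
  apply (nonincreasing_of_derive_nonpos _ (zeta_Omega_ratio' s t)); auto.
  - intros c Hc. apply is_derive_zeta_Omega_ratio. lra.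
  - intros c Hc. unfold zeta_Omega_ratio'.
    assert (0 < Rpower c (s - t - 1) / c) by (apply Rdiv_lt_0_compat; [apply exp_pos | lra]).
    assert (s * (s - t) * (c - 1/2) <= 0).
    { apply Rmult_le_0_r; [nra | lra]. }
    nra.
Qed.

Lemma zeta_Omega_ratio_mid s t x : 0 < x ->
  zeta_Omega_ratio s t ((x + 1) / 2) = rpow ((x + 1) / 2) (s - t - 1) * (s * x + 4 - s).
Proof. intros Hx. unfold zeta_Omega_ratio, rpow. f_equal. field. Qed.

Lemma zeta_gen_sandwich s t m M a b u :
  0 < a -> a <= 1 <= b -> a <= u <= b ->
  (forall c, a <= c <= b -> m <= zeta_Omega_ratio s t c <= M) ->
  m * Omega_gen t u <= zeta_gen s u <= M * Omega_gen t u.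
Proof.
  intros Ha H1 Hu Hratio.
  assert (second_derivatives : forall c, a <= c <= b ->
    m * Omega_gen'' t c <= zeta_gen'' s c <= M * Omega_gen'' t c).
  { intros c Hc. rewrite (zeta_gen''_eq_ratio s t) by lra.
    assert (0 < Omega_gen'' t c) by (apply Omega_gen''_pos; lra).
    specialize (Hratio c Hc). split; nra. }
  split.
  - apply (le_of_derive2_le (fun x => m * Omega_gen t x) (fun x => m * Omega_gen' t x)
             (fun x => m * Omega_gen'' t x) (zeta_gen s) (zeta_gen' s) (zeta_gen'' s) a b 1);
      try lra.
    + intros c Hc. apply is_derive_scal, is_derive_Omega_gen. lra.
    + intros c Hc. apply is_derive_scal, is_derive_Omega_gen'. lra.
    + intros c Hc. apply is_derive_zeta_gen. lra.
    + intros c Hc. apply is_derive_zeta_gen'. lra.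
    + intros c Hc. apply second_derivatives, Hc.
    + rewrite Omega_gen_1, zeta_gen_1. ring.
    + rewrite Omega_gen'_1, zeta_gen'_1. ring.
  - apply (le_of_derive2_le (zeta_gen s) (zeta_gen' s) (zeta_gen'' s)
             (fun x => M * Omega_gen t x) (fun x => M * Omega_gen' t x)
             (fun x => M * Omega_gen'' t x) a b 1); try lra.
    + intros c Hc. apply is_derive_zeta_gen. lra.
    + intros c Hc. apply is_derive_zeta_gen'. lra.
    + intros c Hc. apply is_derive_scal, is_derive_Omega_gen. lra.
    + intros c Hc. apply is_derive_scal, is_derive_Omega_gen'. lra.
    + intros c Hc. apply second_derivatives, Hc.
    + rewrite Omega_gen_1, zeta_gen_1. ring.
    + rewrite Omega_gen'_1, zeta_gen'_1. ring.
Qed.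

Lemma Omega_as_sum n t p q : in_Gamma n p -> in_Gamma n q ->
  Omega n t q p = rsum n (fun i => q i * Omega_gen t ((p i + q i) / (2 * q i))).
Proof.
  intros [Pp Sp] [Pq Sq]. symmetry. unfold Omega, Omega_gen.
  destruct (Req_EM_T t 0) as [->|H0]; [|destruct (Req_EM_T t 1) as [->|H1]].
  - rewrite (rsum_ext n _ (fun i => q i * ln (2 * q i / (p i + q i))
                                     + (1/2) * p i + (-1/2) * q i)).
    + rewrite rsum_lincomb, Sp, Sq. lra.
    + intros i Hi. specialize (Pp i Hi). specialize (Pq i Hi).
      replace (2 * q i / (p i + q i)) with (/ ((p i + q i) / (2 * q i))) by (field; lra).
      rewrite ln_Rinv by (apply Rdiv_lt_0_compat; lra). field. lra.
  - rewrite (rsum_ext n _ (fun i => (p i + q i) / 2 * ln ((p i + q i) / (2 * q i))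
                                     + (-1/2) * p i + (1/2) * q i)).
    + rewrite rsum_lincomb, Sp, Sq. lra.
    + intros i Hi. specialize (Pp i Hi). specialize (Pq i Hi). field. lra.
  - set (k := / (t * (t - 1))).
    rewrite (rsum_ext n _ (fun i => k * (q i * rpow ((p i + q i) / (2 * q i)) t)
                                     + (- k * t / 2) * p i + (- k + k * t / 2) * q i)).
    + rewrite rsum_lincomb, rsum_scal, Sp, Sq. lra.
    + intros i Hi. specialize (Pp i Hi). specialize (Pq i Hi). unfold k, rpow.
      field. repeat split; lra.
Qed.

Lemma zeta_as_sum n s p q : in_Gamma n p -> in_Gamma n q ->
  zeta n s p q = rsum n (fun i => q i * zeta_gen s ((p i + q i) / (2 * q i))).
Proof.
  intros [Pp Sp] [Pq Sq]. symmetry. unfold zeta, zeta_gen.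
  destruct (Req_EM_T s 1) as [->|H1].
  - apply rsum_ext. intros i Hi. specialize (Pp i Hi). specialize (Pq i Hi). field. lra.
  - set (k := / (s - 1)).
    rewrite (rsum_ext n _ (fun i => k * ((p i - q i) * rpow ((p i + q i) / (2 * q i)) (s - 1))
                                     + (- k) * p i + k * q i)).
    + rewrite rsum_lincomb, rsum_scal, Sp, Sq. lra.
    + intros i Hi. specialize (Pp i Hi). specialize (Pq i Hi). unfold k, rpow.
      field. repeat split; lra.
Qed.

Lemma zeta_sandwich n p q r R0 s t m M :
  in_Gamma n p -> in_Gamma n q -> 0 < r ->
  (forall i, (i < n)%nat -> r <= p i / q i <= R0) ->
  (forall c, (r + 1) / 2 <= c <= (R0 + 1) / 2 -> m <= zeta_Omega_ratio s t c <= M) ->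
  m * Omega n t q p <= zeta n s p q <= M * Omega n t q p.
Proof.
  intros Gp Gq Hr Hpq Hratio.
  destruct (Gamma_ratio_bounds n p q r R0 Gp Gq Hpq) as [Hr1 HR1].
  assert (pointwise : forall i, (i < n)%nat ->
    m * Omega_gen t ((p i + q i) / (2 * q i)) <= zeta_gen s ((p i + q i) / (2 * q i))
    <= M * Omega_gen t ((p i + q i) / (2 * q i))).
  { intros i Hi. apply (zeta_gen_sandwich s t m M ((r + 1) / 2) ((R0 + 1) / 2)); auto; try lra.
    destruct Gq as [Pq _]. specialize (Pq i Hi). specialize (Hpq i Hi).
    replace ((p i + q i) / (2 * q i)) with ((p i / q i + 1) / 2) by (field; lra).
    lra. }
  rewrite (Omega_as_sum n t p q Gp Gq), (zeta_as_sum n s p q Gp Gq), <- !rsum_scal.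
  destruct Gq as [Pq _].
  split; apply rsum_le; intros i Hi; specialize (pointwise i Hi); specialize (Pq i Hi); nra.
Qed.

Theorem theorem4p1 (n : nat) (p q : nat -> R) (r R0 s t : R) :
  (2 <= n)%nat ->
  in_Gamma n p -> in_Gamma n q ->
  0 < r -> r <= R0 ->
  (forall i, (i < n)%nat -> r <= p i / q i /\ p i / q i <= R0) ->
  0 <= s -> s <= 4 ->
  (s >= t -> s * (t - s + 6) >= 4 * (1 + t) ->
     rpow ((r + 1) / 2) (s - t - 1) * (s * r + 4 - s) * Omega n t q p
       <= zeta n s p q /\
     zeta n s p q
       <= rpow ((R0 + 1) / 2) (s - t - 1) * (s * R0 + 4 - s) * Omega n t q p) /\
  (s <= t -> s * (t - s + 6) <= 4 * (1 + t) ->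
     rpow ((R0 + 1) / 2) (s - t - 1) * (s * R0 + 4 - s) * Omega n t q p
       <= zeta n s p q /\
     zeta n s p q
       <= rpow ((r + 1) / 2) (s - t - 1) * (s * r + 4 - s) * Omega n t q p).
Proof.
  intros _ Gp Gq Hr _ Hpq Hs _.
  assert (HR0 : 0 < R0) by (destruct (Gamma_ratio_bounds n p q r R0 Gp Gq Hpq); lra).
  rewrite <- (zeta_Omega_ratio_mid s t r), <- (zeta_Omega_ratio_mid s t R0) by lra.
  split; intros Hst Hcond; apply (zeta_sandwich n p q r R0); auto; intros c Hc; split.
  - apply zeta_Omega_ratio_nondecreasing; lra.
  - apply zeta_Omega_ratio_nondecreasing; lra.
  - apply zeta_Omega_ratio_nonincreasing; lra.
  - apply zeta_Omega_ratio_nonincreasing; lra.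
Qed.
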